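(* Let $w:\mathbb N\to\mathbb R_{>0}$ be one of the weight functions $w(n)=n+1$, $w(n)=1$, or $w(n)=\frac1{n+1}$, and let $d_w(x,y)=\sum_{j\ge0}w(j)|x_j-y_j|$ on $\mathbb Z^\infty$. For $j\in\mathbb N$ let $X_j=\mathbb Z_{\ge0}^j\times\mathbb Z_{\le0}\times\mathbb Z^\infty=\{x\in\mathbb Z^\infty: x_0,\dots,x_{j-1}\ge0,\ x_j\le0\}$. Then $\{X_j\}_{j\in\mathbb N}$ is a coarsely excisive cover of $(\mathbb Z^\infty,d_w)$: for every nonempty finite $J\subseteq\mathbb N$ and $R>0$ there is $S>0$ with $\bigcap_{j\in J}N_w(X_j,R)\subseteq N_w(\bigcap_{j\in J}X_j,S)$.
   Context: $\mathbb Z^\infty=\bigoplus_{\mathbb N}\mathbb Z$ is the set of integer sequences with finitely many nonzero entries. $N_w(Y,R)=\{x\in\mathbb Z^\infty:\inf_{y\in Y}d_w(x,y)\le R\}$. A cover by closed subsets is coarsely excisive if the stated neighborhood condition holds for all nonempty finite subcollections and all $R>0$. *)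

From Stdlib Require Import Reals ZArith List Lia Lra.
Import ListNotations.
Open Scope R_scope.

(* Z^infty = finitely supported integer sequences, represented by lists;
   coordinate j is nth j x 0 (trailing entries are 0). Several lists may
   represent the same sequence; all notions below depend only on coordinates. *)
Definition Zinf := list Z.
Definition coord (x : Zinf) (j : nat) : Z := nth j x 0%Z.

Definition dist_w (w : nat -> R) (x y : Zinf) : R :=
  fold_right Rplus 0
    (map (fun j => w j * Rabs (IZR (coord x j - coord y j)))
         (seq 0 (Nat.max (length x) (length y)))).

(* N_w(Y,R) = { x | inf_{y in Y} d_w(x,y) <= R }, with inf over the empty set
   being +infinity; inf <= R unfolded as: for all eps > 0 some y in Y is
   within R + eps. *)
Definition Nbhd (w : nat -> R) (Y : Zinf -> Prop) (r : R) (x : Zinf) : Prop :=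
  forall eps, 0 < eps -> exists y, Y y /\ dist_w w x y < r + eps.

Definition Xj (j : nat) (x : Zinf) : Prop :=
  (forall i, (i < j)%nat -> (0 <= coord x i)%Z) /\ (coord x j <= 0)%Z.

(* The distance from x to X_k is at least the weighted sum [dist_Xj] of the
   coordinate gaps max(0,-x_i) (i < k) and max(0,x_k), so x in N_w(X_k, r)
   bounds this sum by r.  With m = max J, the point y obtained from x by zeroing the
   coordinates in J below m, clamping the other coordinates below m to be
   nonnegative and clamping x_m to be nonpositive lies in every X_j, j in J,
   and each |x_i - y_i| is at most the gap of coordinate i for X_m plus, when
   i is in J, its gap for X_i.  Hence d_w(x, y) <= (|J| + 1) r. *)

From Stdlib Require Import Reals ZArith List Lia Lra.
Import ListNotations.
Open Scope R_scope.

Definition sumR (l : list R) : R := fold_right Rplus 0 l.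

Lemma sumR_app (l1 l2 : list R) : sumR (l1 ++ l2) = sumR l1 + sumR l2.
Proof. induction l1 as [|u l1 IH]; simpl; [lra | rewrite IH; lra]. Qed.

Lemma sumR_map_plus {A : Type} (f g : A -> R) (l : list A) :
  sumR (map (fun i => f i + g i) l) = sumR (map f l) + sumR (map g l).
Proof. induction l as [|u l IH]; simpl; [lra | rewrite IH; lra]. Qed.

Lemma sumR_map_le {A : Type} (f g : A -> R) (l : list A) :
  (forall i, f i <= g i) -> sumR (map f l) <= sumR (map g l).
Proof. intros Hfg; induction l as [|u l IH]; simpl; [lra | specialize (Hfg u); lra]. Qed.

Lemma sumR_map_zero {A : Type} (f : A -> R) (l : list A) :
  (forall i, In i l -> f i = 0) -> sumR (map f l) = 0.
Proof.
  induction l as [|u l IH]; intros Hf; simpl; [lra|].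
  rewrite Hf, IH; [lra | intros i Hi; apply Hf | ]; simpl; auto.
Qed.

Lemma sumR_map_nonneg {A : Type} (f : A -> R) (l : list A) :
  (forall i, 0 <= f i) -> 0 <= sumR (map f l).
Proof. intros Hf; induction l as [|u l IH]; simpl; [lra | specialize (Hf u); lra]. Qed.

Lemma sumR_map_ge_In {A : Type} (f : A -> R) (l : list A) (j : A) :
  (forall i, 0 <= f i) -> In j l -> f j <= sumR (map f l).
Proof.
  intros Hf; induction l as [|u l IH]; simpl; [tauto|].
  intros [<- | Hj].
  - pose proof (sumR_map_nonneg f l Hf); lra.
  - specialize (IH Hj); specialize (Hf u); lra.
Qed.

Lemma sumR_map_le_const {A : Type} (f : A -> R) (l : list A) (r : R) :
  (forall i, In i l -> f i <= r) -> sumR (map f l) <= INR (length l) * r.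
Proof.
  induction l as [|u l IH]; intros Hf; [simpl; lra|].
  change (f u + sumR (map f l) <= INR (S (length l)) * r); rewrite S_INR.
  assert (f u <= r) by (apply Hf; simpl; auto).
  assert (sumR (map f l) <= INR (length l) * r) by (apply IH; intros; apply Hf; simpl; auto).
  lra.
Qed.

Lemma sumR_map_comm {A B : Type} (g : A -> B -> R) (J : list A) (l : list B) :
  sumR (map (fun i => sumR (map (fun j => g j i) J)) l)
  = sumR (map (fun j => sumR (map (g j) l)) J).
Proof.
  induction J as [|j J IH]; simpl.
  - apply sumR_map_zero; reflexivity.
  - rewrite (sumR_map_plus (g j) (fun i => sumR (map (fun k => g k i) J))), IH.
    reflexivity.
Qed.

Lemma sumR_map_seq_extend (f : nat -> R) (M N : nat) :
  (forall i, (M <= i)%nat -> f i = 0) -> (M <= N)%nat ->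
  sumR (map f (seq 0 N)) = sumR (map f (seq 0 M)).
Proof.
  intros Hf HMN.
  replace N with (M + (N - M))%nat by lia.
  rewrite seq_app, map_app, sumR_app, (sumR_map_zero f (seq (0 + M) _)).
  - lra.
  - intros i Hi; apply in_seq in Hi; apply Hf; lia.
Qed.

Lemma coord_overflow (x : Zinf) (j : nat) : (length x <= j)%nat -> coord x j = 0%Z.
Proof. apply nth_overflow. Qed.

Lemma dist_w_seq (w : nat -> R) (x y : Zinf) (N : nat) :
  (length x <= N)%nat -> (length y <= N)%nat ->
  dist_w w x y = sumR (map (fun j => w j * Rabs (IZR (coord x j - coord y j))) (seq 0 N)).
Proof.
  intros Hx Hy; unfold dist_w; fold sumR.
  symmetry; apply sumR_map_seq_extend; [|lia].
  intros i Hi; rewrite !coord_overflow by lia.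
  simpl; rewrite Rabs_R0; ring.
Qed.

Definition Xj_gap (k i : nat) (z : Z) : Z :=
  if (i <? k)%nat then Z.max 0 (- z)
  else if (i =? k)%nat then Z.max 0 z else 0.

Lemma Xj_gap_nonneg (k i : nat) (z : Z) : (0 <= Xj_gap k i z)%Z.
Proof. unfold Xj_gap; destruct (i <? k)%nat; [lia | destruct (i =? k)%nat; lia]. Qed.

Lemma Xj_gap_overflow (k i : nat) (z : Z) : (k < i)%nat -> Xj_gap k i z = 0%Z.
Proof.
  intros Hki; unfold Xj_gap.
  destruct (Nat.ltb_spec i k); [lia|].
  destruct (Nat.eqb_spec i k); [lia | reflexivity].
Qed.

Lemma Xj_gap_le (k i : nat) (x y : Zinf) :
  Xj k y -> (Xj_gap k i (coord x i) <= Z.abs (coord x i - coord y i))%Z.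
Proof.
  intros [Hlt Hk]; unfold Xj_gap.
  destruct (Nat.ltb_spec i k) as [Hi|Hi]; [specialize (Hlt i Hi); lia|].
  destruct (Nat.eqb_spec i k); [subst; lia | lia].
Qed.

Definition dist_Xj (w : nat -> R) (x : Zinf) (k : nat) : R :=
  sumR (map (fun i => w i * IZR (Xj_gap k i (coord x i))) (seq 0 (S k))).

Lemma dist_Xj_seq (w : nat -> R) (x : Zinf) (k N : nat) : (k < N)%nat ->
  sumR (map (fun i => w i * IZR (Xj_gap k i (coord x i))) (seq 0 N)) = dist_Xj w x k.
Proof.
  intros HkN; apply sumR_map_seq_extend; [|lia].
  intros i Hi; rewrite Xj_gap_overflow by lia; ring.
Qed.

Section NonnegativeWeights.

Variable w : nat -> R.
Hypothesis w_nonneg : forall n, 0 <= w n.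

Lemma dist_Xj_le (x y : Zinf) (k : nat) : Xj k y -> dist_Xj w x k <= dist_w w x y.
Proof.
  intros Hy.
  set (N := Nat.max (Nat.max (length x) (length y)) (S k)).
  rewrite (dist_w_seq w x y N), <- (dist_Xj_seq w x k N) by (unfold N; lia).
  apply sumR_map_le; intro i.
  apply Rmult_le_compat_l; [apply w_nonneg|].
  rewrite <- abs_IZR; apply IZR_le, Xj_gap_le, Hy.
Qed.

Lemma Nbhd_Xj_dist_Xj (x : Zinf) (k : nat) (r : R) :
  Nbhd w (Xj k) r x -> dist_Xj w x k <= r.
Proof.
  intros Hx; apply Rnot_lt_le; intro Hlt.
  destruct (Hx (dist_Xj w x k - r)) as [y [Hy Hxy]]; [lra|].
  pose proof (dist_Xj_le x y k Hy); lra.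
Qed.

End NonnegativeWeights.

Lemma le_list_max (l : list nat) (j : nat) : In j l -> (j <= list_max l)%nat.
Proof.
  intros Hj; pose proof (proj1 (list_max_le l (list_max l)) (le_n _)) as Hall.
  rewrite Forall_forall in Hall; auto.
Qed.

Lemma In_list_max (l : list nat) : l <> [] -> In (list_max l) l.
Proof.
  induction l as [|u l IH]; intros Hl; [congruence|].
  destruct l as [|v l]; [simpl; left; lia|].
  change (list_max (u :: v :: l)) with (Nat.max u (list_max (v :: l))).
  destruct (Nat.max_spec u (list_max (v :: l))) as [[_ ->] | [_ ->]].
  - right; apply IH; discriminate.
  - left; reflexivity.
Qed.

Section Projection.

Variable J : list nat.

Definition proj_coord (i : nat) (z : Z) : Z :=
  if (i <? list_max J)%nat then (if in_dec Nat.eq_dec i J then 0 else Z.max z 0)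
  else if (i =? list_max J)%nat then Z.min z 0 else z.

Definition proj (x : Zinf) : Zinf :=
  map (fun i => proj_coord i (coord x i)) (seq 0 (Nat.max (length x) (S (list_max J)))).

Lemma coord_proj (x : Zinf) (i : nat) : coord (proj x) i = proj_coord i (coord x i).
Proof.
  unfold proj, coord at 1.
  set (N := Nat.max (length x) (S (list_max J))).
  destruct (Nat.lt_ge_cases i N) as [Hi|Hi].
  - rewrite (nth_indep _ _ (proj_coord 0 (coord x 0))) by (rewrite length_map, length_seq; lia).
    rewrite (map_nth (fun i => proj_coord i (coord x i))), seq_nth by lia; reflexivity.
  - rewrite nth_overflow by (rewrite length_map, length_seq; lia).
    rewrite coord_overflow by (unfold N in Hi; lia).
    unfold proj_coord.
    destruct (Nat.ltb_spec i (list_max J)); [unfold N in Hi; lia|].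
    destruct (Nat.eqb_spec i (list_max J)); [unfold N in Hi; lia | reflexivity].
Qed.

Lemma proj_Xj (x : Zinf) (j : nat) : In j J -> Xj j (proj x).
Proof.
  intros Hj; pose proof (le_list_max J j Hj).
  split; [intros i Hi|]; rewrite coord_proj; unfold proj_coord.
  - destruct (Nat.ltb_spec i (list_max J)); [|lia].
    destruct (in_dec Nat.eq_dec i J); lia.
  - destruct (Nat.ltb_spec j (list_max J)).
    + destruct (in_dec Nat.eq_dec j J); [lia | contradiction].
    + destruct (Nat.eqb_spec j (list_max J)); lia.
Qed.

Lemma proj_coord_dist (i : nat) (z : Z) :
  (Z.abs (z - proj_coord i z)
   <= Xj_gap (list_max J) i z + (if in_dec Nat.eq_dec i J then Xj_gap i i z else 0))%Z.
Proof.
  unfold proj_coord, Xj_gap; rewrite Nat.ltb_irrefl, Nat.eqb_refl.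
  destruct (Nat.ltb_spec i (list_max J)), (in_dec Nat.eq_dec i J),
    (Nat.eqb_spec i (list_max J)); lia.
Qed.

Variable w : nat -> R.
Hypothesis w_nonneg : forall n, 0 <= w n.

(* For i in J, the extra gap [Xj_gap i i] is one term of the sum over J. *)
Lemma weighted_proj_coord_dist (x : Zinf) (i : nat) :
  w i * Rabs (IZR (coord x i - coord (proj x) i))
  <= w i * IZR (Xj_gap (list_max J) i (coord x i))
     + sumR (map (fun j => w i * IZR (Xj_gap j i (coord x i))) J).
Proof.
  assert (Hnn : forall j, 0 <= w i * IZR (Xj_gap j i (coord x i))).
  { intro j; apply Rmult_le_pos; [apply w_nonneg | apply IZR_le, Xj_gap_nonneg]. }
  pose proof (proj_coord_dist i (coord x i)) as Hz.
  apply IZR_le in Hz; rewrite plus_IZR in Hz.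
  apply Rmult_le_compat_l with (r := w i) in Hz; [|apply w_nonneg].
  rewrite coord_proj, <- abs_IZR.
  destruct (in_dec Nat.eq_dec i J) as [Hi|Hi].
  - pose proof (sumR_map_ge_In _ J i Hnn Hi); lra.
  - pose proof (sumR_map_nonneg _ J Hnn); simpl in Hz; lra.
Qed.

Lemma dist_proj_le (x : Zinf) :
  dist_w w x (proj x)
  <= dist_Xj w x (list_max J) + sumR (map (dist_Xj w x) J).
Proof.
  set (N := Nat.max (length x) (S (list_max J))).
  assert (HN : forall j, In j J -> (j < N)%nat).
  { intros j Hj; pose proof (le_list_max J j Hj); unfold N; lia. }
  rewrite (dist_w_seq w x (proj x) N)
    by (unfold proj; rewrite ?length_map, ?length_seq; unfold N; lia).
  eapply Rle_trans; [apply sumR_map_le, weighted_proj_coord_dist|].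
  rewrite sumR_map_plus, dist_Xj_seq by (unfold N; lia).
  rewrite (sumR_map_comm (fun j i => w i * IZR (Xj_gap j i (coord x i)))).
  apply Rplus_le_compat_l, Req_le.
  f_equal; apply map_ext_in; intros j Hj; apply dist_Xj_seq, HN, Hj.
Qed.

End Projection.

Theorem Xj_cover_excisive (w : nat -> R) (J : list nat) (r : R) (x : Zinf) :
  (forall n, 0 <= w n) -> J <> [] ->
  (forall j, In j J -> Nbhd w (Xj j) r x) ->
  Nbhd w (fun y => forall j, In j J -> Xj j y) ((INR (length J) + 1) * r) x.
Proof.
  intros Hw HJ Hx eps Heps.
  exists (proj J x); split; [intros j Hj; apply proj_Xj, Hj|].
  assert (Hm : dist_Xj w x (list_max J) <= r)
    by (apply Nbhd_Xj_dist_Xj, Hx, In_list_max; assumption).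
  assert (HJr : sumR (map (dist_Xj w x) J) <= INR (length J) * r).
  { apply sumR_map_le_const; intros j Hj; apply Nbhd_Xj_dist_Xj, Hx; assumption. }
  pose proof (dist_proj_le J w Hw x); lra.
Qed.

Theorem lemma7p3p7 :
  forall w : nat -> R,
    (w = (fun n => INR n + 1) \/ w = (fun _ => 1) \/ w = (fun n => 1 / (INR n + 1))) ->
    forall (J : list nat), J <> [] ->
    forall r : R, 0 < r ->
    exists S : R, 0 < S /\
      forall x : Zinf,
        (forall j, In j J -> Nbhd w (Xj j) r x) ->
        Nbhd w (fun y => forall j, In j J -> Xj j y) S x.
Proof.
  intros w Hw J HJ r Hr.
  assert (Hw_nonneg : forall n, 0 <= w n).
  { intro n; pose proof (pos_INR n).
    destruct Hw as [-> | [-> | ->]]; [lra | lra |].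
    apply Rlt_le, Rdiv_lt_0_compat; lra. }
  exists ((INR (length J) + 1) * r); split.
  - pose proof (pos_INR (length J)); apply Rmult_lt_0_compat; lra.
  - intros x Hx; apply Xj_cover_excisive; assumption.
Qed.
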